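(* Under the standing assumptions below, every point $u\in\mathcal P_1$ is both an R-limit and an L-limit of $\mathcal P_1$.
   Context: Fix $\rho_1,\rho_2,\rho_3\in(0,1)$ with $\rho_1+\rho_2+\rho_3>1$ and $\rho_i+\rho_j\le1$ for all $i\ne j$; $\mu_i=1$, $\theta:=\rho_1+\rho_2+\rho_3-1$. $A_i^0:=\{y\in\mathbb R^3: y_1+y_2+y_3=1, y_i=0, y_l\ge0\}$, $A^0:=\bigcup_iA_i^0$; for $z\in A^0\setminus A_j^0$, $f_j(z):=\sum_{i\neq j}\frac{(1-\rho_j)z_i+\rho_i z_j}{(1-\rho_j)+\theta z_j}e_i$. For $(\hat i,\hat j,\hat k)$ equal to $(1,2,3)$ or a cyclic permutation, $(1-x)e_{\hat j}+xe_{\hat k}\in A^0_{\hat i}$ is written $(x,\hat i)$, $\pi((x,\hat i)):=x$. Decision points $d_1,d_2,d_3\in(0,1)$ (identified with $(d_{\hat i},\hat i)$); switching rule $\mathfrak R((x,\hat i))=\hat j$ if $x<d_{\hat i}$, $\hat k$ if $x>d_{\hat i}$, both allowed if $x=d_{\hat i}$; $\varphi(z):=f_{\mathfrak R(z)}(z)$. A trajectory is $(z(t))$ with $z(t+1)\in\varphi(z(t))$; $z$ is a pre-image of $z'$ if some trajectory from $z$ has $z(t)=z'$ for some $t\ge1$. Standing assumption: $d_1$ has infinitely many distinct pre-images, while $d_2$ and $d_3$ have only finitely many. $\mathcal P_1$ is the set consisting of $d_1$ and all its pre-images. A point $u\in A^0_{\hat i}$ is an R-limit (resp. L-limit) of $\mathcal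 P_1$ if there is a sequence $u_n\in\mathcal P_1\cap A^0_{\hat i}$ with $\pi(u_n)$ strictly decreasing (resp. strictly increasing) to $\pi(u)$. *)

From Stdlib Require Import Reals Lra List.
Open Scope R_scope.

Inductive idx : Type := I1 | I2 | I3.

Definition idx_eq_dec (a b : idx) : {a = b} + {a <> b}.
Proof. decide equality. Defined.

(* Cyclic successor: (i^, j^, k^) = (i, nxt i, nxt (nxt i)) ranges over
   (1,2,3), (2,3,1), (3,1,2). *)
Definition nxt (i : idx) : idx :=
  match i with I1 => I2 | I2 => I3 | I3 => I1 end.

Definition vec := idx -> R.

Definition evec (i : idx) : vec := fun l => if idx_eq_dec l i then 1 else 0.

Definition theta (rho : idx -> R) : R := rho I1 + rho I2 + rho I3 - 1.

Definition inA (i : idx) (y : vec) : Prop :=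
  y I1 + y I2 + y I3 = 1 /\ y i = 0 /\ (forall l, 0 <= y l).

Definition inA0 (y : vec) : Prop := exists i, inA i y.

Definition fmap (rho : idx -> R) (j : idx) (z : vec) : vec :=
  fun i => if idx_eq_dec i j then 0
           else ((1 - rho j) * z i + rho i * z j) / ((1 - rho j) + theta rho * z j).

Definition pt (x : R) (i : idx) : vec :=
  fun l => (1 - x) * evec (nxt i) l + x * evec (nxt (nxt i)) l.

Definition piA (i : idx) (u : vec) : R := u (nxt (nxt i)).

(* Switching rule: R(z) may be j (relation form, both allowed at x = d_i). *)
Definition switch (d : idx -> R) (z : vec) (j : idx) : Prop :=
  exists (i : idx) (x : R), inA i z /\ z = pt x i /\
    ((x < d i /\ j = nxt i) \/
     (x > d i /\ j = nxt (nxt i)) \/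
     (x = d i /\ (j = nxt i \/ j = nxt (nxt i)))).

(* z' \in phi(z) = f_{R(z)}(z)  (f_j only defined on A^0 \ A_j^0) *)
Definition step (rho d : idx -> R) (z z' : vec) : Prop :=
  exists j, switch d z j /\ inA0 z /\ ~ inA j z /\ z' = fmap rho j z.

Definition trajectory (rho d : idx -> R) (zt : nat -> vec) : Prop :=
  forall t, step rho d (zt t) (zt (S t)).

Definition preimage (rho d : idx -> R) (z z' : vec) : Prop :=
  exists zt : nat -> vec, trajectory rho d zt /\ zt O = z /\
    exists t, (1 <= t)%nat /\ zt t = z'.

Definition dpt (d : idx -> R) (i : idx) : vec := pt (d i) i.

Definition finite_set (P : vec -> Prop) : Prop :=
  exists l : list vec, forall z, P z -> In z l.

Definition P1 (rho d : idx -> R) (u : vec) : Prop :=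
  u = dpt d I1 \/ preimage rho d u (dpt d I1).

Definition R_limit (rho d : idx -> R) (u : vec) : Prop :=
  exists i, inA i u /\ exists un : nat -> vec,
    (forall n, P1 rho d (un n) /\ inA i (un n)) /\
    (forall n, piA i (un (S n)) < piA i (un n)) /\
    Un_cv (fun n => piA i (un n)) (piA i u).

Definition L_limit (rho d : idx -> R) (u : vec) : Prop :=
  exists i, inA i u /\ exists un : nat -> vec,
    (forall n, P1 rho d (un n) /\ inA i (un n)) /\
    (forall n, piA i (un n) < piA i (un (S n))) /\
    Un_cv (fun n => piA i (un n)) (piA i u).

From Stdlib Require Import Reals Lra Lia List FinFun.
From Stdlib Require Import Classical ClassicalEpsilon FunctionalExtensionality.

(* Each branch of the dynamics acts on edge coordinates as an orientation-reversing
   non-expanding map, and distinct points never share a successor.  Hence the pre-images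
   of d_1 form a single backward orbit d_1 = c_0 <- c_1 <- c_2 <- ..., which is injective
   (there are infinitely many pre-images) and avoids all decision points after c_0 (d_2
   and d_3 have finitely many pre-images), so each c_{n+1} lies inside a branch interval
   mapping to c_n.  A P_1-free interval of length l on one side of c_n therefore pulls
   back to a P_1-free interval on the other side of c_{n+1}, of length at least the
   minimum of l and the distance from c_{n+1} to the end of its branch interval.  For each
   of the finitely many branch ends at most one point of P_1 faces it across a P_1-free
   interval, so the length never drops below a fixed eta > 0: the distinct points
   c_{N+2k} would all carry P_1-free intervals of length eta on the same side, which is
   impossible for infinitely many points of a bounded set. *)

Open Scope R_scope.

Lemma div_in_open_unit a b : 0 < a -> a < b -> 0 < a / b < 1.
Proof.
  intros Ha Hab. split; [apply Rdiv_lt_0_compat; lra|].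
  apply (Rmult_lt_reg_r b); [lra|]. unfold Rdiv. rewrite Rmult_assoc, Rinv_l by lra. lra.
Qed.

Lemma div_in_half_open_unit a b : 0 < a -> a <= b -> 0 < a / b <= 1.
Proof.
  intros Ha Hab. split; [apply Rdiv_lt_0_compat; lra|].
  apply (Rmult_le_reg_r b); [lra|]. unfold Rdiv. rewrite Rmult_assoc, Rinv_l by lra. lra.
Qed.

Section Ratio.
Variables r a th : R.
Hypothesis Hr : 0 < r.
Hypothesis Hra : r <= a.
Hypothesis Hth : 0 <= th.

Definition ratio (t : R) : R := r * t / (a + th * t).

Lemma ratio_increment t t' : 0 <= t -> 0 <= t' ->
  exists k, 0 < k <= 1 /\ ratio t - ratio t' = k * (t - t').
Proof.
  intros Ht Ht'.
  assert (Ht0 : 0 <= th * t) by (apply Rmult_le_pos; lra).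
  assert (Ht0' : 0 <= th * t') by (apply Rmult_le_pos; lra).
  exists (r * a / ((a + th * t) * (a + th * t'))). split.
  - apply div_in_half_open_unit; [apply Rmult_lt_0_compat; lra|].
    apply Rle_trans with (a * a); [apply Rmult_le_compat_r; lra|].
    apply Rmult_le_compat; lra.
  - unfold ratio. field. lra.
Qed.

Lemma ratio_in_open_unit t : r - th < a -> 0 < t <= 1 -> 0 < ratio t < 1.
Proof.
  intros Hlt Ht. unfold ratio. apply div_in_open_unit.
  - apply Rmult_lt_0_compat; lra.
  - destruct (Rle_or_lt (r - th) 0); nra.
Qed.

End Ratio.

Definition reversing_nonexpanding (g : R -> R) (lo hi : R) : Prop :=
  forall a b, lo <= a <= hi -> lo <= b <= hi ->
    exists k, 0 < k <= 1 /\ g a - g b = - k * (a - b).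

Lemma reversing_nonexpanding_narrow g lo hi lo' hi' :
  lo <= lo' -> hi' <= hi -> reversing_nonexpanding g lo hi -> reversing_nonexpanding g lo' hi'.
Proof. intros Hlo Hhi Hg a b Ha Hb. apply Hg; lra. Qed.

Lemma reversing_nonexpanding_inj g lo hi a b : reversing_nonexpanding g lo hi ->
  lo <= a <= hi -> lo <= b <= hi -> g a = g b -> a = b.
Proof.
  intros Hg Ha Hb E. destruct (Hg a b Ha Hb) as [k [Hk Ek]].
  assert (Hz : k * (a - b) = 0) by lra.
  apply Rmult_integral in Hz. lra.
Qed.

Definition free_side (Q : R -> Prop) (x : R) (s : bool) (l : R) : Prop :=
  forall y, (if s then x < y < x + l else x - l < y < x) -> ~ Q y.

Lemma free_side_le Q x s l l' : l' <= l -> free_side Q x s l -> free_side Q x s l'.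
Proof. intros Hl H y Hy. apply H. destruct s; lra. Qed.

Definition side_dist (T x : R) (s : bool) : R := if s then T - x else x - T.

Lemma free_side_pullback g lo hi (Q Q' : R -> Prop) x s l :
  reversing_nonexpanding g lo hi -> lo < x < hi ->
  (forall y, lo < y < hi -> Q y -> Q' (g y)) ->
  free_side Q' (g x) (negb s) l ->
  free_side Q x s (Rmin l (side_dist (if s then hi else lo) x s)).
Proof.
  intros Hg Hx HQ Hfree y Hy Qy.
  pose proof (Rmin_l l (side_dist (if s then hi else lo) x s)) as Hl.
  pose proof (Rmin_r l (side_dist (if s then hi else lo) x s)) as Hb.
  unfold side_dist in *.
  assert (Hyin : lo < y < hi) by (destruct s; lra).
  destruct (Hg y x ltac:(lra) ltac:(lra)) as [k [Hk Ek]].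
  apply (Hfree (g y)); [|exact (HQ y Hyin Qy)].
  destruct s; simpl.
  - assert (0 < k * (y - x) <= y - x) by (split; nra). lra.
  - assert (0 < k * (x - y) <= x - y) by (split; nra). lra.
Qed.

Lemma free_side_separated (Q : R -> Prop) x y s eta : Q x -> Q y -> x <> y ->
  free_side Q x s eta -> free_side Q y s eta -> eta <= Rabs (x - y).
Proof.
  intros Qx Qy Hxy Fx Fy. apply Rnot_lt_le. intros Hlt.
  apply Rabs_def2 in Hlt.
  destruct (Rtotal_order x y) as [H|[H|H]]; [|contradiction|]; destruct s.
  - exact (Fx y ltac:(lra) Qy).
  - exact (Fy x ltac:(lra) Qx).
  - exact (Fy x ltac:(lra) Qx).
  - exact (Fx y ltac:(lra) Qy).
Qed.

(* Two such points cannot coexist: one would lie in the free interval of the other. *)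
Lemma free_to_boundary_isolated (Q : R -> Prop) T s : exists eta, 0 < eta /\
  forall x, Q x -> 0 < side_dist T x s -> free_side Q x s (side_dist T x s) ->
    eta <= side_dist T x s.
Proof.
  unfold side_dist.
  destruct (classic (exists x0, Q x0 /\ 0 < side_dist T x0 s /\
    free_side Q x0 s (side_dist T x0 s))) as [[x0 [Q0 [D0 F0]]]|Hnone].
  - unfold side_dist in *. exists (if s then T - x0 else x0 - T). split; [exact D0|].
    intros x Qx Dx Fx.
    destruct (Rtotal_order x x0) as [Hlt|[->|Hgt]]; [| lra |]; exfalso; destruct s.
    + exact (Fx x0 ltac:(lra) Q0).
    + exact (F0 x ltac:(lra) Qx).
    + exact (F0 x ltac:(lra) Qx).
    + exact (Fx x0 ltac:(lra) Q0).
  - exists 1. split; [lra|]. intros x Qx Dx Fx. exfalso. apply Hnone. exists x. auto.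
Qed.

Lemma free_to_boundary_isolated_list (ts : list ((R -> Prop) * R * bool)) : exists eta, 0 < eta /\
  forall Q T s x, In (Q, T, s) ts -> Q x -> 0 < side_dist T x s ->
    free_side Q x s (side_dist T x s) -> eta <= side_dist T x s.
Proof.
  induction ts as [|[[Q T] s] ts [eta [Heta IH]]].
  - exists 1. split; [lra|]. intros Q T s x [].
  - destruct (free_to_boundary_isolated Q T s) as [eta0 [Heta0 H0]].
    exists (Rmin eta eta0). split; [apply Rmin_pos; lra|].
    intros Q' T' s' x [E|Hin] Qx Dx Fx.
    + injection E as <- <- <-. pose proof (Rmin_r eta eta0). pose proof (H0 x Qx Dx Fx). lra.
    + pose proof (Rmin_l eta eta0). pose proof (IH Q' T' s' x Hin Qx Dx Fx). lra.
Qed.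

Lemma bounded_seq_close_pair (u : nat -> R) a b eta : 0 < eta ->
  (forall n, a <= u n <= b) -> exists i j, (i < j)%nat /\ Rabs (u i - u j) < eta.
Proof.
  intros Heta Hu. destruct (Bolzano_Weierstrass u _ (compact_P3 a b) Hu) as [l Hl].
  assert (Hhalf : 0 < eta / 2) by lra.
  assert (Hnb : neighbourhood (disc l (mkposreal _ Hhalf)) l) by
    (exists (mkposreal _ Hhalf); intros y Hy; exact Hy).
  destruct (Hl _ 0%nat Hnb) as [i [_ Hi]].
  destruct (Hl _ (S i) Hnb) as [j [Hij Hj]].
  exists i, j. split; [lia|]. unfold disc in Hi, Hj; simpl in Hi, Hj.
  apply Rle_lt_trans with (Rabs (u i - l) + Rabs (l - u j)).
  - replace (u i - u j) with ((u i - l) + (l - u j)) by ring. apply Rabs_triang.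
  - rewrite <- Rabs_Ropp, Ropp_minus_distr in Hj. lra.
Qed.

Lemma decreasing_seq_to (x : R) (P : R -> Prop) :
  (forall l, 0 < l -> exists y, x < y < x + l /\ P y) ->
  exists u : nat -> R, (forall n, P (u n)) /\ (forall n, u (S n) < u n) /\ Un_cv u x.
Proof.
  intros Hdense.
  set (pick := fun l => epsilon (inhabits 0) (fun y => x < y < x + l /\ P y)).
  assert (Hpick : forall l, 0 < l -> x < pick l < x + l /\ P (pick l))
    by (intros l Hl; apply epsilon_spec, Hdense, Hl).
  set (u := fix u n := match n with
                       | O => pick 1
                       | S m => pick (Rmin (u m - x) (/ INR (S (S m)))) end).
  assert (Hinv : forall n, 0 < / INR (S n)) by (intro n; apply Rinv_0_lt_compat, lt_0_INR; lia).
  assert (Hu : forall n, x < u n < x + / INR (S n) /\ P (u n)).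
  { induction n as [|n [Hn _]].
    - replace (/ INR 1) with 1 by (simpl; field). apply Hpick; lra.
    - assert (Hm : 0 < Rmin (u n - x) (/ INR (S (S n)))) by (apply Rmin_pos; [lra | apply Hinv]).
      pose proof (Rmin_r (u n - x) (/ INR (S (S n)))).
      destruct (Hpick _ Hm) as [Hb HP].
      change (u (S n)) with (pick (Rmin (u n - x) (/ INR (S (S n))))). split; [lra | exact HP]. }
  exists u. split; [intro n; apply Hu|]. split.
  - intro n. destruct (Hu n) as [Hn _].
    assert (Hm : 0 < Rmin (u n - x) (/ INR (S (S n)))) by (apply Rmin_pos; [lra | apply Hinv]).
    pose proof (Rmin_l (u n - x) (/ INR (S (S n)))).
    destruct (Hpick _ Hm) as [Hb _].
    change (u (S n)) with (pick (Rmin (u n - x) (/ INR (S (S n))))). lra.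
  - intros eps Heps. destruct (archimed_cor1 eps Heps) as [N [HN HN0]].
    exists N. intros n Hn. unfold R_dist. destruct (Hu n) as [Hb _].
    rewrite Rabs_right by lra.
    assert (/ INR (S n) <= / INR N)
      by (apply Rinv_le_contravar; [apply lt_0_INR | apply le_INR]; lia).
    lra.
Qed.

Lemma increasing_seq_to (x : R) (P : R -> Prop) :
  (forall l, 0 < l -> exists y, x - l < y < x /\ P y) ->
  exists u : nat -> R, (forall n, P (u n)) /\ (forall n, u n < u (S n)) /\ Un_cv u x.
Proof.
  intros Hdense.
  destruct (decreasing_seq_to (- x) (fun y => P (- y))) as [u [Hu [Hdec Hcv]]].
  - intros l Hl. destruct (Hdense l Hl) as [y [Hy Py]]. exists (- y).
    rewrite Ropp_involutive. split; [lra | exact Py].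
  - exists (fun n => - u n). split; [exact Hu|]. split; [intro n; specialize (Hdec n); lra|].
    intros eps Heps. destruct (Hcv eps Heps) as [N HN]. exists N. intros n Hn.
    unfold R_dist in *. replace (- u n - x) with (- (u n - - x)) by ring.
    rewrite Rabs_Ropp. exact (HN n Hn).
Qed.

Lemma nxt3 p : nxt (nxt (nxt p)) = p. Proof. destruct p; reflexivity. Qed.

Lemma nxt_inj p q : nxt p = nxt q -> p = q. Proof. destruct p, q; simpl; congruence. Qed.

Lemma neq_nxt p : p <> nxt p. Proof. destruct p; discriminate. Qed.

Lemma neq_nxt2 p : p <> nxt (nxt p). Proof. destruct p; discriminate. Qed.

Lemma pt_self x p : pt x p p = 0. Proof. destruct p; unfold pt, evec; simpl; ring. Qed.
Lemma pt_nxt x p : pt x p (nxt p) = 1 - x. Proof. destruct p; unfold pt, evec; simpl; ring. Qed.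
Lemma pt_nxt2 x p : pt x p (nxt (nxt p)) = x. Proof. destruct p; unfold pt, evec; simpl; ring. Qed.

Lemma piA_pt p x : piA p (pt x p) = x. Proof. apply pt_nxt2. Qed.

Lemma pt_inj x p x' p' : 0 < x < 1 -> pt x p = pt x' p' -> p = p' /\ x = x'.
Proof.
  intros Hx E.
  assert (Hp : p = p').
  { assert (E' := f_equal (fun v => v p') E). simpl in E'. rewrite pt_self in E'.
    destruct p, p'; unfold pt, evec in E'; simpl in E'; auto; lra. }
  subst p'. split; [reflexivity|].
  rewrite <- (piA_pt p x), <- (piA_pt p x'), E. reflexivity.
Qed.

Lemma pt_corner p : pt 0 p = pt 1 (nxt (nxt p)).
Proof. apply functional_extensionality; intro l; destruct p, l; unfold pt, evec; simpl; ring. Qed.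

Lemma inA_pt p x : 0 <= x <= 1 -> inA p (pt x p).
Proof.
  intros Hx. split; [|split].
  - destruct p; unfold pt, evec; simpl; ring.
  - apply pt_self.
  - intro l. destruct p, l; unfold pt, evec; simpl; lra.
Qed.

Lemma inA_pt_bounds p x : inA p (pt x p) -> 0 <= x <= 1.
Proof.
  intros [_ [_ Hnn]]. pose proof (Hnn (nxt p)). pose proof (Hnn (nxt (nxt p))).
  rewrite pt_nxt in *. rewrite pt_nxt2 in *. lra.
Qed.

Lemma inA_eq_pt p z : inA p z -> z = pt (piA p z) p.
Proof.
  intros [Hs [H0 _]]. apply functional_extensionality; intro l.
  destruct p, l; unfold piA, pt, evec; simpl in *; lra.
Qed.

Lemma injective_seq_not_in_list {A} (f : nat -> A) (l : list A) :
  (forall a b, f a = f b -> a = b) -> ~ (forall k, In (f k) l).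
Proof.
  intros Hinj Hin.
  assert (Hlen := NoDup_incl_length (l := map f (seq 0 (S (length l)))) (l' := l)).
  rewrite length_map, length_seq in Hlen.
  enough (S (length l) <= length l)%nat by lia.
  apply Hlen.
  - apply Injective_map_NoDup; [exact Hinj | apply seq_NoDup].
  - intros y Hy. apply in_map_iff in Hy. destruct Hy as [k [<- _]]. apply Hin.
Qed.

Section Dynamics.
Variables rho d : idx -> R.
Hypothesis Hrho : forall i, 0 < rho i < 1.
Hypothesis Hsum : rho I1 + rho I2 + rho I3 > 1.
Hypothesis Hpair : forall i j, i <> j -> rho i + rho j <= 1.
Hypothesis Hd : forall i, 0 < d i < 1.

Lemma theta_pos : 0 < theta rho. Proof. unfold theta; lra. Qed.

Lemma theta_rot p : theta rho = rho p + rho (nxt p) + rho (nxt (nxt p)) - 1.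
Proof. destruct p; unfold theta; simpl; ring. Qed.

(* Edge coordinates of the two branches leaving the point (x, p):
   [f_{nxt p}] sends it to (gL p x, nxt p) and [f_{nxt (nxt p)}] to (gR p x, nxt (nxt p)). *)
Definition gL (p : idx) (x : R) : R := ratio (rho p) (1 - rho (nxt p)) (theta rho) (1 - x).
Definition gR (p : idx) (x : R) : R := 1 - ratio (rho p) (1 - rho (nxt (nxt p))) (theta rho) x.

Lemma fmap_pt_nxt p x : 0 <= x <= 1 -> fmap rho (nxt p) (pt x p) = pt (gL p x) (nxt p).
Proof.
  intros Hx. pose proof theta_pos. pose proof (Hrho (nxt p)).
  assert (0 <= theta rho * (1 - x)) by (apply Rmult_le_pos; lra).
  apply functional_extensionality; intro l. unfold gL, ratio.
  destruct p, l; unfold fmap, pt, evec, theta in *; simpl in *; field; lra.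
Qed.

Lemma fmap_pt_nxt2 p x : 0 <= x <= 1 ->
  fmap rho (nxt (nxt p)) (pt x p) = pt (gR p x) (nxt (nxt p)).
Proof.
  intros Hx. pose proof theta_pos. pose proof (Hrho (nxt (nxt p))).
  assert (0 <= theta rho * x) by (apply Rmult_le_pos; lra).
  apply functional_extensionality; intro l. unfold gR, ratio.
  destruct p, l; unfold fmap, pt, evec, theta in *; simpl in *; field; lra.
Qed.

Lemma gL_reversing p : reversing_nonexpanding (gL p) 0 1.
Proof.
  intros a b Ha Hb. pose proof (Hrho p). pose proof (Hpair p (nxt p) (neq_nxt p)).
  destruct (ratio_increment (rho p) (1 - rho (nxt p)) (theta rho) ltac:(lra) ltac:(lra)
              (Rlt_le _ _ theta_pos) (1 - a) (1 - b) ltac:(lra) ltac:(lra)) as [k [Hk Ek]].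
  exists k. split; [exact Hk|]. unfold gL. rewrite Ek. ring.
Qed.

Lemma gR_reversing p : reversing_nonexpanding (gR p) 0 1.
Proof.
  intros a b Ha Hb. pose proof (Hrho p).
  pose proof (Hpair p (nxt (nxt p)) (neq_nxt2 p)).
  destruct (ratio_increment (rho p) (1 - rho (nxt (nxt p))) (theta rho) ltac:(lra) ltac:(lra)
              (Rlt_le _ _ theta_pos) a b ltac:(lra) ltac:(lra)) as [k [Hk Ek]].
  exists k. split; [exact Hk|]. unfold gR. lra.
Qed.

Lemma gL_in p x : 0 <= x < 1 -> 0 < gL p x < 1.
Proof.
  intros Hx. pose proof (Hrho p). pose proof (Hrho (nxt (nxt p))). pose proof (theta_rot p).
  pose proof (Hpair p (nxt p) (neq_nxt p)).
  apply ratio_in_open_unit; pose proof theta_pos; lra.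
Qed.

Lemma gR_in p x : 0 < x <= 1 -> 0 < gR p x < 1.
Proof.
  intros Hx. pose proof (Hrho p). pose proof (Hrho (nxt p)). pose proof (theta_rot p).
  pose proof (Hpair p (nxt (nxt p)) (neq_nxt2 p)).
  enough (0 < ratio (rho p) (1 - rho (nxt (nxt p))) (theta rho) x < 1) by (unfold gR; lra).
  apply ratio_in_open_unit; pose proof theta_pos; lra.
Qed.

Lemma gL_gR_corner p : gL p 0 = gR (nxt (nxt p)) 1.
Proof.
  pose proof theta_pos. pose proof (Hrho (nxt p)).
  unfold gL, gR, ratio. rewrite nxt3. rewrite (theta_rot p) in *. field. lra.
Qed.

Lemma gL_gR_eq_corner p x x' : 0 <= x <= 1 -> 0 <= x' <= 1 ->
  gL p x = gR (nxt (nxt p)) x' -> x = 0 /\ x' = 1.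
Proof.
  intros Hx Hx' E.
  destruct (gL_reversing p x 0 Hx ltac:(lra)) as [k [Hk Ek]].
  destruct (gR_reversing (nxt (nxt p)) x' 1 Hx' ltac:(lra)) as [k' [Hk' Ek']].
  rewrite <- gL_gR_corner in Ek'.
  assert (0 <= k * x) by (apply Rmult_le_pos; lra).
  assert (0 <= k' * (1 - x')) by (apply Rmult_le_pos; lra).
  split; nra.
Qed.

Lemma step_L p x : 0 <= x <= d p -> step rho d (pt x p) (pt (gL p x) (nxt p)).
Proof.
  intros Hx. pose proof (Hd p). exists (nxt p). split; [|split; [|split]].
  - exists p, x. split; [apply inA_pt; lra|]. split; [reflexivity|].
    destruct (Rle_lt_or_eq_dec x (d p) (proj2 Hx)); tauto.
  - exists p. apply inA_pt. lra.
  - intros [_ [Hc _]]. rewrite pt_nxt in Hc. lra.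
  - symmetry. apply fmap_pt_nxt. lra.
Qed.

Lemma step_R p x : d p <= x <= 1 -> step rho d (pt x p) (pt (gR p x) (nxt (nxt p))).
Proof.
  intros Hx. pose proof (Hd p). exists (nxt (nxt p)). split; [|split; [|split]].
  - exists p, x. split; [apply inA_pt; lra|]. split; [reflexivity|].
    destruct (Rle_lt_or_eq_dec (d p) x (proj1 Hx)) as [Hlt|Heq]; [|subst]; tauto.
  - exists p. apply inA_pt. lra.
  - intros [_ [Hc _]]. rewrite pt_nxt2 in Hc. lra.
  - symmetry. apply fmap_pt_nxt2. lra.
Qed.

Lemma step_cases z w : step rho d z w -> exists p x, z = pt x p /\
  ((0 <= x <= d p /\ w = pt (gL p x) (nxt p)) \/
   (d p <= x <= 1 /\ w = pt (gR p x) (nxt (nxt p)))).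
Proof.
  intros [j [[p [x [HA [-> Hsw]]]] [_ [_ ->]]]].
  pose proof (inA_pt_bounds _ _ HA) as Hx.
  exists p, x. split; [reflexivity|].
  destruct Hsw as [[? ->]|[[? ->]|[? [->| ->]]]].
  - left. split; [lra|]. apply fmap_pt_nxt. lra.
  - right. split; [lra|]. apply fmap_pt_nxt2. lra.
  - left. split; [lra|]. apply fmap_pt_nxt. lra.
  - right. split; [lra|]. apply fmap_pt_nxt2. lra.
Qed.

Lemma step_target_interior z w : step rho d z w -> exists q y, 0 < y < 1 /\ w = pt y q.
Proof.
  intros Hs. destruct (step_cases z w Hs) as [p [x [_ [[Hx ->]|[Hx ->]]]]]; pose proof (Hd p).
  - exists (nxt p), (gL p x). split; [apply gL_in; lra | reflexivity].
  - exists (nxt (nxt p)), (gR p x). split; [apply gR_in; lra | reflexivity].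
Qed.

Lemma step_exists z : inA0 z -> exists w, step rho d z w /\ inA0 w.
Proof.
  intros [p Hp]. set (x := piA p z).
  assert (Hz : z = pt x p) by (apply inA_eq_pt, Hp).
  assert (Hx : 0 <= x <= 1) by (apply (inA_pt_bounds p); rewrite <- Hz; exact Hp).
  rewrite Hz. pose proof (Hd p).
  destruct (Rle_or_lt x (d p)).
  - exists (pt (gL p x) (nxt p)). split; [apply step_L; lra|].
    exists (nxt p). apply inA_pt. pose proof (gL_in p x). lra.
  - exists (pt (gR p x) (nxt (nxt p))). split; [apply step_R; lra|].
    exists (nxt (nxt p)). apply inA_pt. pose proof (gR_in p x). lra.
Qed.

Lemma step_deterministic p x w : 0 < x < 1 -> step rho d (pt x p) w ->
  (x < d p -> w = pt (gL p x) (nxt p)) /\ (d p < x -> w = pt (gR p x) (nxt (nxt p))).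
Proof.
  intros Hx Hs. destruct (step_cases _ w Hs) as [p' [x' [Hz [[? ->]|[? ->]]]]];
    destruct (pt_inj _ _ _ _ Hx Hz) as [<- <-]; split; intros; solve [reflexivity | lra].
Qed.

Lemma step_pred_unique_cross p x p' x' : 0 <= x <= d p -> d p' <= x' <= 1 ->
  pt (gL p x) (nxt p) = pt (gR p' x') (nxt (nxt p')) -> pt x p = pt x' p'.
Proof.
  intros Hx Hx' E. pose proof (Hd p). pose proof (Hd p').
  destruct (pt_inj _ _ _ _ (gL_in p x ltac:(lra)) E) as [Ep Ey].
  assert (p' = nxt (nxt p)) by (rewrite <- (nxt3 p'), <- Ep; destruct p; reflexivity). subst p'.
  destruct (gL_gR_eq_corner p x x' ltac:(lra) ltac:(lra) Ey) as [-> ->].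
  apply pt_corner.
Qed.

Lemma step_pred_unique z z' w : step rho d z w -> step rho d z' w -> z = z'.
Proof.
  intros Hs Hs'.
  destruct (step_cases z w Hs) as [p [x [-> [[Hx ->]|[Hx ->]]]]];
  destruct (step_cases z' _ Hs') as [p' [x' [-> [[Hx' E]|[Hx' E]]]]];
  pose proof (Hd p); pose proof (Hd p').
  - destruct (pt_inj _ _ _ _ (gL_in p x ltac:(lra)) E) as [Ep Ey].
    apply nxt_inj in Ep. subst p'.
    rewrite (reversing_nonexpanding_inj _ _ _ x x' (gL_reversing p) ltac:(lra) ltac:(lra) Ey).
    reflexivity.
  - exact (step_pred_unique_cross p x p' x' Hx Hx' E).
  - symmetry. exact (step_pred_unique_cross p' x' p x Hx' Hx (eq_sym E)).
  - destruct (pt_inj _ _ _ _ (gR_in p x ltac:(lra)) E) as [Ep Ey].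
    apply nxt_inj, nxt_inj in Ep. subst p'.
    rewrite (reversing_nonexpanding_inj _ _ _ x x' (gR_reversing p) ltac:(lra) ltac:(lra) Ey).
    reflexivity.
Qed.

Fixpoint reaches (n : nat) (z : vec) : Prop :=
  match n with
  | O => z = dpt d I1
  | S m => exists w, step rho d z w /\ reaches m w
  end.

Lemma reaches_unique n z z' : reaches n z -> reaches n z' -> z = z'.
Proof.
  revert z z'. induction n as [|n IH]; simpl; intros z z' Hz Hz'; [congruence|].
  destruct Hz as [w [Hs Hw]], Hz' as [w' [Hs' Hw']].
  rewrite (IH _ _ Hw Hw') in Hs. exact (step_pred_unique _ _ _ Hs Hs').
Qed.

Lemma reaches_le m n : (m <= n)%nat -> (exists z, reaches n z) -> exists z, reaches m z.
Proof.
  induction 1 as [|n _ IH]; [tauto|]. intros [z [w [_ Hw]]]. apply IH. exists w. exact Hw.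
Qed.

Lemma preimage_reaches z : preimage rho d z (dpt d I1) -> exists t, (1 <= t)%nat /\ reaches t z.
Proof.
  intros [zt [Htraj [<- [t [Ht Hzt]]]]]. exists t. split; [exact Ht|].
  assert (Hgen : forall m, (m <= t)%nat -> reaches m (zt (t - m)%nat)).
  { induction m as [|m IH]; intros Hm; simpl.
    - rewrite Nat.sub_0_r. exact Hzt.
    - exists (zt (t - m)%nat). split; [|apply IH; lia].
      replace (t - m)%nat with (S (t - S m)) by lia. apply Htraj. }
  rewrite <- (Nat.sub_diag t). apply Hgen. lia.
Qed.

Definition next_point (z : vec) : vec := epsilon (inhabits z) (fun w => step rho d z w /\ inA0 w).

Lemma next_point_spec z : inA0 z -> step rho d z (next_point z) /\ inA0 (next_point z).
Proof. intros Hz. unfold next_point. apply epsilon_spec, step_exists, Hz. Qed.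

Definition bwd (n : nat) : vec := epsilon (inhabits (dpt d I1)) (reaches n).

Lemma bwd_eq n z : reaches n z -> z = bwd n.
Proof.
  intros Hz. apply (reaches_unique n); [exact Hz|].
  unfold bwd. apply epsilon_spec. exists z. exact Hz.
Qed.

Lemma bwd_0 : bwd 0 = dpt d I1.
Proof. symmetry. apply bwd_eq. reflexivity. Qed.

Lemma inA0_dpt i : inA0 (dpt d i).
Proof. exists i. apply inA_pt. pose proof (Hd i). lra. Qed.

Section InfinitePreimages.
Hypothesis H1 : ~ finite_set (fun z => preimage rho d z (dpt d I1)).

Lemma reaches_every n : exists z, reaches n z.
Proof.
  apply NNPP. intros Hnone. apply H1. exists (map bwd (seq 0 n)).
  intros z Hz. destruct (preimage_reaches z Hz) as [t [_ Ht]].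
  destruct (Nat.le_gt_cases n t) as [Hnt|Htn].
  - exfalso. apply Hnone, (reaches_le n t Hnt). exists z. exact Ht.
  - apply in_map_iff. exists t. split; [symmetry; apply bwd_eq, Ht | apply in_seq; lia].
Qed.

Lemma reaches_bwd n : reaches n (bwd n).
Proof. destruct (reaches_every n) as [z Hz]. rewrite <- (bwd_eq n z Hz). exact Hz. Qed.

Lemma step_bwd n : step rho d (bwd (S n)) (bwd n).
Proof.
  destruct (reaches_bwd (S n)) as [w [Hs Hw]]. rewrite <- (bwd_eq n w Hw). exact Hs.
Qed.

Definition bwd_traj (n t : nat) : vec :=
  if (t <=? n)%nat then bwd (n - t) else Nat.iter (t - n) next_point (bwd 0).

Lemma bwd_traj_trajectory n : trajectory rho d (bwd_traj n).
Proof.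
  assert (Hiter : forall k, inA0 (Nat.iter k next_point (bwd 0))).
  { induction k as [|k IH]; simpl; [rewrite bwd_0; apply inA0_dpt | apply next_point_spec, IH]. }
  intro t. unfold bwd_traj.
  destruct (Nat.leb_spec t n); destruct (Nat.leb_spec (S t) n).
  - replace (n - t)%nat with (S (n - S t)) by lia. apply step_bwd.
  - replace t with n by lia. rewrite Nat.sub_diag. replace (S n - n)%nat with 1%nat by lia.
    apply next_point_spec, (Hiter 0%nat).
  - lia.
  - replace (S t - n)%nat with (S (t - n)) by lia. apply next_point_spec, Hiter.
Qed.

Lemma preimage_bwd n j : (j < n)%nat -> preimage rho d (bwd n) (bwd j).
Proof.
  intros Hjn. exists (bwd_traj n). split; [apply bwd_traj_trajectory|]. unfold bwd_traj. split.
  - simpl. rewrite Nat.sub_0_r. reflexivity.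
  - exists (n - j)%nat. split; [lia|].
    destruct (Nat.leb_spec (n - j) n); [|lia]. f_equal. lia.
Qed.

Lemma P1_bwd n : P1 rho d (bwd n).
Proof.
  destruct n as [|n]; [left; apply bwd_0|]. right. rewrite <- bwd_0. apply preimage_bwd. lia.
Qed.

Lemma P1_is_bwd u : P1 rho d u -> exists n, u = bwd n.
Proof.
  intros [->|Hu]; [exists 0%nat; symmetry; apply bwd_0|].
  destruct (preimage_reaches u Hu) as [t [_ Ht]]. exists t. apply bwd_eq, Ht.
Qed.

(* A coincidence [bwd n = bwd m] would make the backward orbit periodic, hence finite. *)
Lemma bwd_inj n m : bwd n = bwd m -> n = m.
Proof.
  assert (Hlt : forall n m, (n < m)%nat -> bwd n <> bwd m).
  { clear n m. intros n m Hnm E.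
    assert (Hshift : forall k, bwd (n + k) = bwd (m + k)).
    { induction k as [|k IH]; [rewrite !Nat.add_0_r; exact E|].
      rewrite !Nat.add_succ_r.
      apply (step_pred_unique _ _ (bwd (n + k))); [apply step_bwd | rewrite IH; apply step_bwd]. }
    assert (Hin : forall t, In (bwd t) (map bwd (seq 0 m))).
    { intro t. induction t as [t IH] using (well_founded_induction Wf_nat.lt_wf).
      destruct (Nat.lt_ge_cases t m) as [Htm|Htm].
      - apply in_map, in_seq. lia.
      - replace t with (m + (t - m))%nat by lia. rewrite <- Hshift. apply IH. lia. }
    apply H1. exists (map bwd (seq 0 m)). intros z Hz.
    destruct (P1_is_bwd z (or_intror Hz)) as [t ->]. apply Hin. }
  intros E. destruct (Nat.lt_trichotomy n m) as [Hnm|[Hnm|Hnm]]; [| exact Hnm |].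
  - exfalso. exact (Hlt n m Hnm E).
  - exfalso. exact (Hlt m n Hnm (eq_sym E)).
Qed.

Definition E (n : nat) : idx :=
  epsilon (inhabits I1) (fun p => exists x, 0 < x < 1 /\ bwd n = pt x p).
Definition X (n : nat) : R := piA (E n) (bwd n).

Lemma bwd_pt n : bwd n = pt (X n) (E n) /\ 0 < X n < 1.
Proof.
  assert (HE : exists x, 0 < x < 1 /\ bwd n = pt x (E n)).
  { apply (epsilon_spec (inhabits I1) (fun p => exists x, 0 < x < 1 /\ bwd n = pt x p)).
    destruct (step_target_interior _ _ (step_bwd n)) as [q [y [Hy Hq]]]. exists q, y. auto. }
  destruct HE as [x [Hx Hn]]. unfold X. rewrite Hn, piA_pt. auto.
Qed.

Definition P1_on (e : idx) (y : R) : Prop := P1 rho d (pt y e).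

Lemma P1_on_interior e y : P1_on e y -> 0 < y < 1.
Proof.
  intros HP. destruct (P1_is_bwd _ HP) as [n Hn]. destruct (bwd_pt n) as [Hb Hx].
  rewrite Hb in Hn. destruct (pt_inj _ _ _ _ Hx (eq_sym Hn)) as [_ <-]. exact Hx.
Qed.

Lemma P1_on_bwd n : P1_on (E n) (X n).
Proof. unfold P1_on. rewrite <- (proj1 (bwd_pt n)). apply P1_bwd. Qed.

Hypothesis H2 : finite_set (fun z => preimage rho d z (dpt d I2)).
Hypothesis H3 : finite_set (fun z => preimage rho d z (dpt d I3)).

Lemma bwd_not_dpt n i : i <> I1 -> bwd n <> dpt d i.
Proof.
  intros Hi E.
  assert (Hfin : finite_set (fun z => preimage rho d z (dpt d i))) by (destruct i; tauto).
  destruct Hfin as [l Hl].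
  apply (injective_seq_not_in_list (fun k => bwd (n + 1 + k)) l).
  - intros a b Hab. apply bwd_inj in Hab. lia.
  - intro k. apply Hl. rewrite <- E. apply preimage_bwd. lia.
Qed.

Lemma X_not_decision n : (1 <= n)%nat -> X n <> d (E n).
Proof.
  intros Hn Hx.
  assert (Hb : bwd n = dpt d (E n)) by (unfold dpt; rewrite <- Hx; apply bwd_pt).
  destruct (E n) eqn:He.
  - rewrite <- bwd_0 in Hb. apply bwd_inj in Hb. lia.
  - exact (bwd_not_dpt n I2 ltac:(discriminate) Hb).
  - exact (bwd_not_dpt n I3 ltac:(discriminate) Hb).
Qed.

Lemma P1_on_step p x w : P1_on p x -> x <> d p -> step rho d (pt x p) w -> P1 rho d w.
Proof.
  intros HP Hxd Hs. pose proof (P1_on_interior p x HP) as Hx.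
  destruct (P1_is_bwd _ HP) as [[|n] Hn].
  - rewrite bwd_0 in Hn. destruct (pt_inj _ _ _ _ Hx Hn) as [-> ->]. contradiction.
  - pose proof (step_bwd n) as Hs'. rewrite <- Hn in Hs'.
    destruct (step_deterministic p x w Hx Hs) as [A1 A2].
    destruct (step_deterministic p x _ Hx Hs') as [B1 B2].
    destruct (Rdichotomy x (d p) Hxd) as [Hlt|Hgt].
    + rewrite (A1 Hlt), <- (B1 Hlt). apply P1_bwd.
    + rewrite (A2 Hgt), <- (B2 Hgt). apply P1_bwd.
Qed.

Definition branch_end (p : idx) (x : R) (s : bool) : R :=
  if Rlt_dec x (d p) then (if s then d p else 0) else (if s then 1 else d p).

Lemma branch_end_dist_pos p x s : 0 < x < 1 -> x <> d p -> 0 < side_dist (branch_end p x s) x s.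
Proof. intros Hx Hxd. unfold branch_end, side_dist. destruct (Rlt_dec x (d p)), s; lra. Qed.

Lemma gap_propagates n s l :
  free_side (P1_on (E n)) (X n) (negb s) l ->
  free_side (P1_on (E (S n))) (X (S n)) s
    (Rmin l (side_dist (branch_end (E (S n)) (X (S n)) s) (X (S n)) s)).
Proof.
  intros Hfree.
  destruct (bwd_pt (S n)) as [Hb Hx]. destruct (bwd_pt n) as [Hb' Hx'].
  pose proof (X_not_decision (S n) ltac:(lia)) as Hxd.
  set (p := E (S n)) in *. set (x := X (S n)) in *.
  pose proof (step_bwd n) as Hs. rewrite Hb in Hs.
  destruct (step_deterministic p x _ Hx Hs) as [A1 A2].
  pose proof (Hd p).
  unfold branch_end. destruct (Rlt_dec x (d p)) as [Hlt|Hge].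
  - rewrite (A1 Hlt) in Hb'. destruct (pt_inj _ _ _ _ (gL_in p x ltac:(lra)) Hb') as [HE HX].
    rewrite <- HE, <- HX in Hfree.
    apply free_side_pullback with (g := gL p) (Q' := P1_on (nxt p)); [| lra | | exact Hfree].
    + apply (reversing_nonexpanding_narrow _ 0 1); [lra | lra | apply gL_reversing].
    + intros y Hy HP. apply (P1_on_step p y); [exact HP | lra | apply step_L; lra].
  - assert (Hgt : d p < x) by lra.
    rewrite (A2 Hgt) in Hb'. destruct (pt_inj _ _ _ _ (gR_in p x ltac:(lra)) Hb') as [HE HX].
    rewrite <- HE, <- HX in Hfree.
    apply free_side_pullback with (g := gR p) (Q' := P1_on (nxt (nxt p))); [| lra | | exact Hfree].
    + apply (reversing_nonexpanding_narrow _ 0 1); [lra | lra | apply gR_reversing].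
    + intros y Hy HP. apply (P1_on_step p y); [exact HP | lra | apply step_R; lra].
Qed.

Definition branch_ends : list ((R -> Prop) * R * bool) :=
  flat_map (fun e => (P1_on e, 0, false) :: (P1_on e, d e, false) ::
                     (P1_on e, d e, true) :: (P1_on e, 1, true) :: nil)
           (I1 :: I2 :: I3 :: nil).

Lemma branch_end_in p x s : In (P1_on p, branch_end p x s, s) branch_ends.
Proof. unfold branch_end. destruct (Rlt_dec x (d p)), s, p; simpl; tauto. Qed.

(* Below the isolation constant of the finitely many branch ends, a free interval
   never gets shortened by a branch end when pulled back. *)
Lemma gap_step_uniform : exists eta0, 0 < eta0 /\ forall n s eta, eta <= eta0 ->
  free_side (P1_on (E n)) (X n) (negb s) eta -> free_side (P1_on (E (S n))) (X (S n)) s eta.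
Proof.
  destruct (free_to_boundary_isolated_list branch_ends) as [eta0 [Heta0 Hiso]].
  exists eta0. split; [exact Heta0|]. intros n s eta Hle Hfree.
  pose proof (gap_propagates n s eta Hfree) as Hnext.
  set (D := side_dist (branch_end (E (S n)) (X (S n)) s) (X (S n)) s) in *.
  destruct (Rle_or_lt eta D) as [HeD|HDe]; [rewrite (Rmin_left _ _ HeD) in Hnext; exact Hnext|].
  exfalso. rewrite Rmin_right in Hnext by lra.
  assert (HD : 0 < D) by (apply branch_end_dist_pos;
    [apply bwd_pt | apply X_not_decision; lia]).
  assert (eta0 <= D)
    by exact (Hiso _ _ _ _ (branch_end_in (E (S n)) (X (S n)) s) (P1_on_bwd (S n)) HD Hnext).
  lra.
Qed.

Lemma gap_persists N s l : 0 < l -> free_side (P1_on (E N)) (X N) s l ->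
  exists eta, 0 < eta /\ forall k, free_side (P1_on (E (N + 2 * k))) (X (N + 2 * k)) s eta.
Proof.
  intros Hl Hfree. destruct gap_step_uniform as [eta0 [Heta0 Hstep]].
  exists (Rmin l eta0). split; [apply Rmin_pos; lra|].
  pose proof (Rmin_r l eta0) as Hle.
  induction k as [|k IH].
  - rewrite Nat.add_0_r. exact (free_side_le _ _ _ _ _ (Rmin_l l eta0) Hfree).
  - replace (N + 2 * S k)%nat with (S (S (N + 2 * k))) by lia.
    apply (Hstep _ _ _ Hle). apply (Hstep _ _ _ Hle). rewrite Bool.negb_involutive. exact IH.
Qed.

Definition chart (e : idx) (y : R) : R :=
  match e with I1 => y | I2 => 2 + y | I3 => 4 + y end.

Lemma chart_close_same_edge e e' y y' : 0 < y < 1 -> 0 < y' < 1 ->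
  Rabs (chart e y - chart e' y') < 1 -> e = e'.
Proof.
  intros Hy Hy' Hc. apply Rabs_def2 in Hc.
  destruct e, e'; simpl in *; solve [reflexivity | lra].
Qed.

Lemma no_gap N s l : 0 < l -> ~ free_side (P1_on (E N)) (X N) s l.
Proof.
  intros Hl Hfree. destruct (gap_persists N s l Hl Hfree) as [eta [Heta Hgap]].
  set (m k := (N + 2 * k)%nat).
  destruct (bounded_seq_close_pair (fun k => chart (E (m k)) (X (m k))) 0 5 (Rmin eta 1))
    as [i [j [Hij Hclose]]].
  - apply Rmin_pos; lra.
  - intro k. pose proof (proj2 (bwd_pt (m k))). destruct (E (m k)); simpl; lra.
  - pose proof (Rmin_l eta 1). pose proof (Rmin_r eta 1).
    destruct (bwd_pt (m i)) as [Hbi Hxi]. destruct (bwd_pt (m j)) as [Hbj Hxj].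
    assert (HE : E (m i) = E (m j)) by (apply (chart_close_same_edge _ _ _ _ Hxi Hxj); lra).
    assert (HX : X (m i) <> X (m j)).
    { intros HX.
      assert (Hij' : m i = m j) by (apply bwd_inj; rewrite Hbi, Hbj, HE, HX; reflexivity).
      unfold m in Hij'. lia. }
    assert (Hsep := free_side_separated _ _ _ s eta (P1_on_bwd (m i))
                      ltac:(rewrite HE; apply P1_on_bwd) HX (Hgap i) ltac:(rewrite HE; apply Hgap)).
    simpl in Hclose. rewrite HE in Hclose.
    replace (chart (E (m j)) (X (m i)) - chart (E (m j)) (X (m j))) with (X (m i) - X (m j))
      in Hclose by (destruct (E (m j)); simpl; ring).
    lra.
Qed.

Lemma R_limit_of_seq e x v : 0 <= x <= 1 -> (forall n, P1_on e (v n)) ->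
  (forall n, v (S n) < v n) -> Un_cv v x -> R_limit rho d (pt x e).
Proof.
  intros Hx Hv Hdec Hcv. exists e. split; [apply inA_pt, Hx|].
  exists (fun n => pt (v n) e). split; [|split].
  - intro n. split; [apply Hv|]. apply inA_pt. pose proof (P1_on_interior _ _ (Hv n)). lra.
  - intro n. rewrite !piA_pt. apply Hdec.
  - intros eps Heps. destruct (Hcv eps Heps) as [M HM]. exists M. intros n Hn.
    rewrite !piA_pt. exact (HM n Hn).
Qed.

Lemma L_limit_of_seq e x v : 0 <= x <= 1 -> (forall n, P1_on e (v n)) ->
  (forall n, v n < v (S n)) -> Un_cv v x -> L_limit rho d (pt x e).
Proof.
  intros Hx Hv Hinc Hcv. exists e. split; [apply inA_pt, Hx|].
  exists (fun n => pt (v n) e). split; [|split].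
  - intro n. split; [apply Hv|]. apply inA_pt. pose proof (P1_on_interior _ _ (Hv n)). lra.
  - intro n. rewrite !piA_pt. apply Hinc.
  - intros eps Heps. destruct (Hcv eps Heps) as [M HM]. exists M. intros n Hn.
    rewrite !piA_pt. exact (HM n Hn).
Qed.

Lemma P1_two_sided_limit u : P1 rho d u -> R_limit rho d u /\ L_limit rho d u.
Proof.
  intros HP. destruct (P1_is_bwd u HP) as [N ->].
  destruct (bwd_pt N) as [-> Hx].
  assert (Hdense : forall (s : bool) l, 0 < l -> exists y,
            (if s then X N < y < X N + l else X N - l < y < X N) /\ P1_on (E N) y).
  { intros s l Hl. apply NNPP. intros Hnone. apply (no_gap N s l Hl).
    intros y Hy HPy. apply Hnone. exists y. auto. }
  split.
  - destruct (decreasing_seq_to (X N) (P1_on (E N)) (Hdense true)) as [v [Hv [Hdec Hcv]]].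
    apply (R_limit_of_seq _ _ v); [lra | exact Hv | exact Hdec | exact Hcv].
  - destruct (increasing_seq_to (X N) (P1_on (E N)) (Hdense false)) as [v [Hv [Hinc Hcv]]].
    apply (L_limit_of_seq _ _ v); [lra | exact Hv | exact Hinc | exact Hcv].
Qed.

End InfinitePreimages.
End Dynamics.

Theorem lemma5p4 (rho d : idx -> R)
  (Hrho : forall i, 0 < rho i < 1)
  (Hsum : rho I1 + rho I2 + rho I3 > 1)
  (Hpair : forall i j, i <> j -> rho i + rho j <= 1)
  (Hd : forall i, 0 < d i < 1)
  (H1 : ~ finite_set (fun z => preimage rho d z (dpt d I1)))
  (H2 : finite_set (fun z => preimage rho d z (dpt d I2)))
  (H3 : finite_set (fun z => preimage rho d z (dpt d I3))) :
  forall u, P1 rho d u -> R_limit rho d u /\ L_limit rho d u.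
Proof. exact (P1_two_sided_limit rho d Hrho Hsum Hpair Hd H1 H2 H3). Qed.
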